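(* Let $k$ be a positive integer, let $e$ be the all-ones vector of length $m$, and let $S$ be a nonnegative integral vector of length $n$. Then $\mathcal{C}_{m,n}(ke,S)$ is nonempty if and only if there is a row convex matrix in $\mathcal{A}_{m,n}(ke,S)$.
   Context: $\mathcal{A}_{m,n}(R,S)$ is the set of $m\times n$ $(0,1)$-matrices with row sum vector $R$ and column sum vector $S$. A $(0,1)$-matrix is row convex if the 1's in each row occur consecutively, column convex if the 1's in each column occur consecutively, and convex if it is both. $\mathcal{C}_{m,n}(R,S)$ is the set of convex matrices in $\mathcal{A}_{m,n}(R,S)$. *)

From mathcomp Require Import all_boot all_algebra.
Set Implicit Arguments. Unset Strict Implicit. Unset Printing Implicit Defensive.

Definition zero_one (m n : nat) (A : 'M[nat]_(m, n)) : Prop :=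
  forall i j, A i j <= 1.

Definition in_A (m n : nat) (R : 'I_m -> nat) (S : 'I_n -> nat)
    (A : 'M[nat]_(m, n)) : Prop :=
  [/\ zero_one A,
      forall i, \sum_(j < n) A i j = R i
    & forall j, \sum_(i < m) A i j = S j].

Definition row_convex (m n : nat) (A : 'M[nat]_(m, n)) : Prop :=
  forall (i : 'I_m) (j1 j j2 : 'I_n),
    j1 <= j -> j <= j2 -> A i j1 = 1 -> A i j2 = 1 -> A i j = 1.

Definition col_convex (m n : nat) (A : 'M[nat]_(m, n)) : Prop :=
  forall (j : 'I_n) (i1 i i2 : 'I_m),
    i1 <= i -> i <= i2 -> A i1 j = 1 -> A i2 j = 1 -> A i j = 1.

Definition convex (m n : nat) (A : 'M[nat]_(m, n)) : Prop :=
  row_convex A /\ col_convex A.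

Definition in_C (m n : nat) (R : 'I_m -> nat) (S : 'I_n -> nat)
    (A : 'M[nat]_(m, n)) : Prop :=
  in_A R S A /\ convex A.

From mathcomp Require Import all_boot all_algebra.
From mathcomp Require Import zify.

Set Implicit Arguments.
Unset Strict Implicit.
Unset Printing Implicit Defensive.

(* A row-convex (0,1)-row with k ones is a window of k consecutive columns, so
   a row-convex matrix with all row sums k is determined by the starting
   columns of its rows.  Its column sums only depend on the multiset of these
   starts, hence sorting the starts keeps the matrix in A(ke,S).  Once the
   starts are nondecreasing the matrix is also column convex: if column j
   meets the windows of rows i1 <= i2 and i1 <= i <= i2, then
   c i <= c i2 <= j < c i1 + k <= c i + k, which uses that all windows have
   the same length k. *)

Lemma nat_of_bool_eq1 (b : bool) : (b : nat) = 1 <-> b.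
Proof. by case: b. Qed.

Definition window (s k j : nat) : bool := s <= j < s + k.

Lemma sum_window n s k : \sum_(j < n) window s k j = minn n (s + k) - s.
Proof.
elim: n => [|n IHn]; first by rewrite big_ord0 min0n.
rewrite big_ord_recr /= IHn /window.
by case: (leqP s n) => ?; case: (ltnP n (s + k)) => ? /=; lia.
Qed.

Lemma convex_row_window n k (r : 'I_n -> nat) :
  0 < k -> (forall j, r j <= 1) -> \sum_(j < n) r j = k ->
  (forall j1 j j2 : 'I_n,
     j1 <= j -> j <= j2 -> r j1 = 1 -> r j2 = 1 -> r j = 1) ->
  exists2 s, s + k <= n & forall j, r j = window s k j.
Proof.
move=> k_gt0 r01 sum_r r_convex.
have [j0 r_j0] : exists j0, r j0 == 1.
  apply/existsP; apply: contraTT k_gt0 => /existsPn r_ne1.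
  rewrite -sum_r big1 // => j _.
  by have := r01 j; have := r_ne1 j; case: (r j) => [|[|]].
have [s /eqP r_s s_min] := arg_minnP (P := fun j => r j == 1) (@nat_of_ord n) r_j0.
have [t /eqP r_t t_max] := arg_maxnP (P := fun j => r j == 1) (@nat_of_ord n) r_j0.
have r_window j : r j = window s (t.+1 - s) j.
  have [/andP[s_le_j j_le_t] | out] := boolP (window s (t.+1 - s) j).
    by apply: (r_convex s j t) => //; lia.
  have /negbTE r_ne1 : r j != 1.
    apply: contra out => /[dup] /s_min s_le_j /t_max j_le_t.
    by rewrite /window; lia.
  by have := r01 j; move: r_ne1; case: (r j) => [|[|]].
have s_le_t : s <= t by apply: s_min; rewrite r_t.
have t_lt_n : t < n := ltn_ord t.
have k_eq : k = t.+1 - s.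
  by rewrite -sum_r (eq_bigr _ (fun j _ => r_window j)) sum_window; lia.
by exists s => [|j]; rewrite k_eq ?r_window //; lia.
Qed.

Section WindowMatrix.

Variables (m n k : nat) (c : 'I_m -> nat).

Definition window_mx : 'M[nat]_(m, n) :=
  \matrix_(i, j) (window (c i) k j : nat).

Lemma window_mx_zero_one : zero_one window_mx.
Proof. by move=> i j; rewrite mxE leq_b1. Qed.

Lemma window_mx_row_sum i : c i + k <= n -> \sum_(j < n) window_mx i j = k.
Proof.
by move=> fits; under eq_bigr do rewrite mxE; rewrite sum_window; lia.
Qed.

Lemma window_mx_row_convex : row_convex window_mx.
Proof.
move=> i j1 j j2 le_j1j le_jj2; rewrite !mxE.
move=> /nat_of_bool_eq1/andP[? ?] /nat_of_bool_eq1/andP[? ?].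
by apply/nat_of_bool_eq1/andP; lia.
Qed.

Lemma window_mx_col_convex :
  (forall i1 i2 : 'I_m, i1 <= i2 -> c i1 <= c i2) -> col_convex window_mx.
Proof.
move=> c_homo j i1 i i2 le_i1i le_ii2; rewrite !mxE.
have := c_homo _ _ le_i1i; have := c_homo _ _ le_ii2.
move=> ? ? /nat_of_bool_eq1/andP[? ?] /nat_of_bool_eq1/andP[? ?].
by apply/nat_of_bool_eq1/andP; lia.
Qed.

End WindowMatrix.

Section SortFun.

Variables (m : nat) (c : 'I_m -> nat).

Definition sort_fun (i : 'I_m) : nat := nth 0 (sort leq (codom c)) i.

Lemma size_sort_codom : size (sort leq (codom c)) = m.
Proof. by rewrite size_sort size_codom card_ord. Qed.

Lemma sort_fun_codom i : sort_fun i \in codom c.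
Proof.
by rewrite -(perm_mem (permEl (perm_sort leq _))) mem_nth ?size_sort_codom.
Qed.

Lemma sort_fun_homo (i1 i2 : 'I_m) : i1 <= i2 -> sort_fun i1 <= sort_fun i2.
Proof.
apply: (sorted_leq_nth leq_trans leqnn); rewrite ?inE ?size_sort_codom //.
exact/sort_sorted/leq_total.
Qed.

Lemma big_sort_fun (R : Type) (idx : R) (op : Monoid.com_law idx)
    (F : nat -> R) :
  \big[op/idx]_(i < m) F (sort_fun i) = \big[op/idx]_(i < m) F (c i).
Proof.
transitivity (\big[op/idx]_(x <- sort leq (codom c)) F x).
  by rewrite (big_nth 0) size_sort_codom big_mkord.
by rewrite (perm_big _ (permEl (perm_sort leq _))) big_map enumT.
Qed.

End SortFun.

Theorem mainTheorem5 (m n k : nat) (S : 'I_n -> nat) :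
  0 < k ->
  (exists A : 'M[nat]_(m, n), in_C (fun _ => k) S A) <->
  (exists A : 'M[nat]_(m, n), in_A (fun _ => k) S A /\ row_convex A).
Proof.
move=> k_gt0.
split=> [[A [A_in [A_convex _]]] | [A [[A01 A_row A_col] A_convex]]].
  by exists A.
have /fin_all_exists2[s s_fit s_win] :
    forall i, exists2 s, s + k <= n & forall j, A i j = window s k j.
  move=> i; apply: (convex_row_window k_gt0 (A01 i) (A_row i)).
  by move=> j1 j j2; apply: A_convex.
exists (window_mx n k (sort_fun s)); split; first split.
- exact: window_mx_zero_one.
- move=> i; apply: window_mx_row_sum.
  by have /codomP[i' ->] := sort_fun_codom s i; apply: s_fit.
- move=> j; rewrite -A_col; under eq_bigr do rewrite mxE.
  under [RHS]eq_bigr do rewrite s_win.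
  exact: (big_sort_fun s _ (fun x => window x k j : nat)).
- split; first exact: window_mx_row_convex.
  by apply: window_mx_col_convex; apply: sort_fun_homo.
Qed.
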